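(* Let $\lambda\ne0$, let $r>1$, and let $T_1$ be the single-vertex-bag weighted threshold matrix on $v_1,\dots,v_r$ with vertex weights $p^{(1)}_i=0$ if $i\equiv1,2\pmod4$ and $p^{(1)}_i=\lambda$ if $i\equiv0,3\pmod4$ (edge weights $\epsilon^{(1)}_{\ell,j}$ to be chosen). Then for every $i\in\{1,\dots,r-1\}$ the following holds: for every choice of nonzero reals $\epsilon^{(1)}_{\ell,j}$ with $i<\ell<j\le r$, $j$ even, there exist nonzero reals $\epsilon^{(1)}_{\ell,j}$ for all $\ell\le i$ and all even $j>\ell$ ($j\le r$), and single-vertex-bag weighted threshold matrices $T_2,\dots,T_{i+1}$, where $T_m$ lives on $v_m,\dots,v_r$ with vertex weights $p^{(m)}_s$ and edge weights $\epsilon^{(m)}_{s,j}$, such that for every $k\in\{1,\dots,i\}$ (with the convention $\epsilon^{(k)}_{k,k+1}=0$ when $k+1$ is odd): (ii) $\epsilon^{(k)}_{k,j}=\epsilon^{(k)}_{k+1,j}$ for all even $j$ with $k+1<j\le r$; (iii) if $k+1$ is even and $q\in\{0,2\}$ satisfies $k+1\equiv q\pmod 4$, then $\epsilon^{(k)}_{k,k+1}=(q-1)\lambda$; (iv) $p^{(k+1)}_{k+1}=p^{(k)}_k+\epsilon^{(k)}_{k,k+1}$; $\epsilon^{(k+1)}_{k+1,j}=\sqrt2\,\epsilon^{(k)}_{k+1,j}$ for even $j$ with $k+1<j\le r$; $p^{(k+1)}_z=p^{(k)}_z=p^{(1)}_z$ for $k+1<z\le r$; and $\epsilon^{(k+1)}_{z,j}=\epsilon^{(k)}_{z,j}=\epsilon^{(1)}_{z,j}$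 for $k+1<z<j\le r$, $j$ even; (v) $\mathrm{Spec}(T_k)=\mathrm{Spec}(T_{k+1})\cup\{x_k\}$, where $x_k=p^{(k)}_k-\epsilon^{(k)}_{k,k+1}$ (so $x_k=p^{(k)}_k$ if $k$ is even), and $x_k=0$ if $k\equiv0$, $x_k=-\lambda$ if $k\equiv1$, $x_k=\lambda$ if $k\equiv2$, $x_k=2\lambda$ if $k\equiv3\pmod4$.
   Context: A single-vertex-bag weighted threshold matrix on $v_k,\dots,v_r$ is the real symmetric matrix indexed by $v_k,\dots,v_r$ with diagonal entries $p_i$ (the vertex weights) and, for $i<j$, entry $\epsilon_{i,j}\ne 0$ at positions $(v_i,v_j),(v_j,v_i)$ if $j$ is even and entry $0$ if $j$ is odd (so $v_i$ and $v_j$, $i<j$, are adjacent iff $j$ is even). $\mathrm{Spec}$ denotes the multiset of eigenvalues, and $\cup$ of multisets adds multiplicities. *)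

From HB Require Import structures.
From mathcomp Require Import all_boot all_order all_algebra.
From mathcomp Require Import reals.
Set Implicit Arguments. Unset Strict Implicit. Unset Printing Implicit Defensive.
Import Order.TTheory GRing.Theory Num.Theory.
Local Open Scope ring_scope.

(* A weighted
   threshold matrix on v_k..v_r is given by vertex weights p : nat -> R
   (p s = weight of v_s) and edge weights e : nat -> nat -> R
   (e l j = epsilon_{l,j}, meaningful for l < j). *)

Definition epsE (R : ringType) (e : nat -> nat -> R) (l j : nat) : R :=
  if odd j then 0 else e l j.

Definition svb_matrix (R : ringType) (k r : nat) (p : nat -> R)
  (e : nat -> nat -> R) : 'M[R]_(r.+1 - k) :=
  \matrix_(a < r.+1 - k, b < r.+1 - k)
    let i := (k + a)%N in let j := (k + b)%N in
    if i == j then p i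
    else if (i < j)%N then epsE e i j else epsE e j i.

Definition svb_weights (R : ringType) (k r : nat) (e : nat -> nat -> R) : Prop :=
  forall l j : nat, (k <= l)%N -> (l < j)%N -> (j <= r)%N -> ~~ odd j -> e l j != 0.

(* Spec as a multiset: multiplicity of a as an eigenvalue of A
   (multiplicity as a root of the characteristic polynomial). *)
Definition spec_mult (R : fieldType) (n : nat) (A : 'M[R]_n) (a : R) : nat :=
  mup a (char_poly A).

From HB Require Import structures.
From mathcomp Require Import all_boot all_order all_algebra.
From mathcomp Require Import reals.
From mathcomp Require Import ring zify.
Import Order.TTheory GRing.Theory Num.Theory.
Set Implicit Arguments. Unset Strict Implicit.
Local Open Scope ring_scope.

(* If v_k and v_(k+1) are twins in T_k (equal diagonal entries p, joined by an
   edge of weight eps, with equal edges to every other vertex), subtracting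
   row k+1 from row k of xI - T_k and then adding column k to column k+1
   splits off the factor x - (p - eps).  The remaining minor is conjugate, by
   diag(sqrt 2, 1, ..., 1), to xI - T_(k+1), where the twins are merged into a
   single vertex of weight p + eps whose edges are scaled by sqrt 2.  The free
   edge weights of T_1 are chosen backwards from T_(i+1) so that v_k and
   v_(k+1) are twins in T_k for every k <= i; the vertex weights of the merged
   vertices, and hence the eigenvalues x_k, are then computed mod 4. *)

Lemma det_twin_rows (R : comPzRingType) n (M : 'M[R]_n.+2) (q : R) :
  (forall j : 'I_n.+2, M 0 j = q * ((val j == 0)%:R - (val j == 1)%:R) + M (lift 0 0) j) ->
  \det M = q * \det (\matrix_(i, j) (M (lift 0 i) (lift 0 j) + (val j == 0)%:R * M (lift 0 i) 0)).
Proof.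
set i1 : 'I_n.+2 := lift 0 0 => row0E.
pose M2 := \matrix_(i, j) if val i == 0 then (val j == 0)%:R - (val j == 1)%:R else M i j.
pose M1 := \matrix_(i, j) if val i == 0 then M i1 j else M i j.
have detM : \det M = q * \det M2 + 1 * \det M1.
  by apply: (determinant_multilinear (i0 := 0)); apply/matrixP => i j; rewrite !mxE ?row0E ?mul1r.
have detM1 : \det M1 = 0 by apply: (determinant_alternate (i1 := 0) (i2 := i1)) => // j; rewrite !mxE.
pose M3 := \matrix_(i, j) if val j == 1 then M2 i j + M2 i 0 else M2 i j.
pose M4 := \matrix_(i, j) if val j == 1 then M2 i 0 else M2 i j.
have bump1 (k : 'I_n.+1) : (bump 1 k == 1) = false.
  by rewrite eq_sym; exact/negbTE/neq_bump.
have detM3 : \det M3 = \det M2.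
  rewrite -det_tr -[\det M2]det_tr.
  rewrite (determinant_multilinear (i0 := i1) (B := M2^T) (C := M4^T) (b := 1) (c := 1)).
  - have -> : \det M4^T = 0.
      by apply: (determinant_alternate (i1 := 0) (i2 := i1)) => // j; rewrite !mxE.
    by rewrite mul1r mulr0 addr0.
  - by apply/rowP => j; rewrite !mxE /= !mul1r.
  - by apply/matrixP => i j; rewrite !mxE /= bump1.
  - by apply/matrixP => i j; rewrite !mxE /= bump1.
rewrite detM detM1 mulr0 addr0 -detM3 (expand_det_row _ 0) big_ord_recl big1 ?addr0.
  rewrite /cofactor !mxE /= subr0 mul1r expr0 mul1r; congr (_ * \det _).
  apply/matrixP => i j; rewrite !mxE /= eqSS.
  by case: (val j == 0); rewrite ?mul1r ?mul0r ?addr0.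
move=> j _; rewrite !mxE /=.
case: j => [[|j] lt_j] /=; last by rewrite subrr mul0r.
by rewrite subr0 sub0r addrC subrr mul0r.
Qed.

Lemma char_poly_twin (R : fieldType) n (F G : nat -> nat -> R) (al eps s : R) :
  s != 0 -> F 0%N 0%N = al -> F 1%N 1%N = al -> F 0%N 1%N = eps -> F 1%N 0%N = eps ->
  (forall j, (2 <= j < n.+2)%N -> F 0%N j = F 1%N j) ->
  G 0%N 0%N = al + eps ->
  (forall j, (0 < j < n.+1)%N -> G 0%N j = s * F 1%N j.+1) ->
  (forall i, (0 < i < n.+1)%N -> s * G i 0%N = F i.+1 0%N + F i.+1 1%N) ->
  (forall i j, (0 < i < n.+1)%N -> (0 < j < n.+1)%N -> G i j = F i.+1 j.+1) ->
  char_poly (\matrix_(a < n.+2, b < n.+2) F a b) =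
  ('X - (al - eps)%:P) * char_poly (\matrix_(a < n.+1, b < n.+1) G a b).
Proof.
move=> s0 F00 F11 F01 F10 F0j G00 G0j Gi0 Gij.
rewrite /char_poly (@det_twin_rows _ _ _ ('X - (al - eps)%:P)); last first.
  move=> [[|[|j]] lt_j]; rewrite !mxE /= /bump /= ?mulr1n ?mulr0n.
  - by rewrite F00 F10 !polyCB; ring.
  - by rewrite F01 F11 !polyCB; ring.
  - by rewrite F0j ?lt_j // addn0; ring.
congr (_ * _).
pose d (x : R) := \row_(i < n.+1) (if val i == 0 then x else 1)%:P.
have detd x : \det (diag_mx (d x)) = x%:P.
  by rewrite det_diag big_ord_recl big1 => [|i _]; rewrite mxE ?mulr1.
have sVs : (s^-1)%:P * s%:P = 1 :> {poly R} by rewrite -polyCM mulVf.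
transitivity (\det (diag_mx (d s^-1)) * \det (char_poly_mx (\matrix_(a < n.+1, b < n.+1) G a b))
  * \det (diag_mx (d s))); last by rewrite !detd mulrAC sVs mul1r.
rewrite -!det_mulmx; congr (\det _); rewrite mul_diag_mx mul_mx_diag.
apply/matrixP => -[[|i] lt_i] [[|j] lt_j]; rewrite !mxE /= /bump /= ?add1n ?addn0.
- by rewrite mulrAC sVs mul1r F11 F10 G00 polyCD; ring.
- rewrite (G0j j.+1 lt_j) !mulr0n !sub0r mul0r addr0 polyC1 mulr1 polyCM.
  by rewrite mulrN mulrA sVs mul1r.
- rewrite !mulr0n !sub0r mul1r polyC1 mul1r mulNr -polyCM [G _ _ * s]mulrC (Gi0 i.+1 lt_i).
  by rewrite polyCD; ring.
- by rewrite polyC1 mulr1 mul0r addr0 (inj_eq lift_inj) (Gij i.+1 j.+1 lt_i lt_j) mul1r.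
Qed.

Section ThresholdMatrix.
Variables (R : nzRingType) (k : nat) (p : nat -> R) (e : nat -> nat -> R).

Definition svb_entry (a b : nat) : R :=
  let i := (k + a)%N in let j := (k + b)%N in
  if i == j then p i else if (i < j)%N then epsE e i j else epsE e j i.

Lemma svb_matrixE r : svb_matrix k r p e = \matrix_(a, b) svb_entry a b.
Proof. by []. Qed.

Lemma svb_entry_diag a : svb_entry a a = p (k + a).
Proof. by rewrite /svb_entry eqxx. Qed.

Lemma svb_entry_lt a b : (a < b)%N -> svb_entry a b = epsE e (k + a) (k + b).
Proof. by move=> lt_ab; rewrite /svb_entry ltn_add2l lt_ab eqn_add2l ltn_eqF. Qed.

Lemma svb_entry_gt a b : (b < a)%N -> svb_entry a b = epsE e (k + b) (k + a).
Proof. by move=> lt_ba; rewrite /svb_entry ltn_add2l ltnNge ltnW // eqn_add2l gtn_eqF. Qed.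

End ThresholdMatrix.

Lemma svb_entrySS (R : nzRingType) k (p : nat -> R) e a b :
  svb_entry k p e a.+1 b.+1 = svb_entry k.+1 p e a b.
Proof. by rewrite /svb_entry !addnS -!addSn. Qed.

Lemma epsE_eq (R : nzRingType) (e e' : nat -> nat -> R) l l' j (c : R) :
  (~~ odd j -> e l j = c * e' l' j) -> epsE e l j = c * epsE e' l' j.
Proof. by rewrite /epsE; case: (odd j) => [_|->]; rewrite ?mulr0. Qed.

Lemma char_poly_svb_twin (R : fieldType) k r (p p' : nat -> R) (e e' : nat -> nat -> R) (s : R) :
  (k < r)%N -> s != 0 -> s ^+ 2 = 2 ->
  p k.+1 = p k ->
  (forall j, (k.+1 < j <= r)%N -> ~~ odd j -> e k j = e k.+1 j) ->
  p' k.+1 = p k + epsE e k k.+1 ->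
  (forall j, (k.+1 < j <= r)%N -> ~~ odd j -> e' k.+1 j = s * e k.+1 j) ->
  (forall z, (k.+1 < z <= r)%N -> p' z = p z) ->
  (forall z j, (k.+1 < z < j)%N -> (j <= r)%N -> ~~ odd j -> e' z j = e z j) ->
  char_poly (svb_matrix k r p e) =
  ('X - (p k - epsE e k k.+1)%:P) * char_poly (svb_matrix k.+1 r p' e').
Proof.
move=> lt_kr s0 s2 pk ek p'k e'k p'z e'z.
have [n rk] : exists n, (r.+1 - k = n.+2)%N by exists (r - k.+1)%N; lia.
have rk' : (r.+1 - k.+1 = n.+1)%N by lia.
rewrite !svb_matrixE rk rk'.
have epsE_k j : (k.+1 < j <= r)%N -> epsE e k j = 1 * epsE e k.+1 j.
  by move=> kj; apply: epsE_eq => ej; rewrite mul1r ek.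
have epsE'_k j : (k.+1 < j <= r)%N -> epsE e' k.+1 j = s * epsE e k.+1 j.
  by move=> kj; apply: epsE_eq => ej; rewrite e'k.
have epsE'_z z j : (k.+1 < z < j)%N -> (j <= r)%N -> epsE e' z j = 1 * epsE e z j.
  by move=> kzj jr; apply: epsE_eq => ej; rewrite mul1r e'z.
apply: (char_poly_twin s0).
- by rewrite svb_entry_diag addn0.
- by rewrite svb_entry_diag addn1.
- by rewrite svb_entry_lt // addn0 addn1.
- by rewrite svb_entry_gt // addn0 addn1.
- move=> j /andP[j1 jn]; rewrite !svb_entry_lt ?(ltnW j1) // addn0 addn1 epsE_k ?mul1r //; lia.
- by rewrite svb_entry_diag addn0.
- move=> j /andP[j0 jn]; rewrite !svb_entry_lt // addn0 addn1 addnS -addSn epsE'_k //; lia.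
- move=> i /andP[i0 ilt]; rewrite !svb_entry_gt // !addn0 addn1 addnS -addSn.
  rewrite epsE'_k ?epsE_k; try lia.
  by rewrite mulrA -expr2 s2; ring.
- move=> i j /andP[i0 ilt] /andP[j0 jlt]; rewrite svb_entrySS /svb_entry /=.
  case: ifP => [/eqP/addnI ->|/negbT neq_ij]; first by apply: p'z; lia.
  by case: ifP => [lt_ij|/negbT le_ji]; rewrite epsE'_z ?mul1r //; lia.
Qed.

Lemma spec_mult_mulXsubC (R : fieldType) n m (A : 'M[R]_n) (B : 'M[R]_m) x :
  char_poly A = ('X - x%:P) * char_poly B ->
  forall a, spec_mult A a = (spec_mult B a + (a == x))%N.
Proof.
move=> cpA a; rewrite /spec_mult cpA mupM ?polyXsubC_eq0 ?monic_neq0 ?char_poly_monic //.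
by rewrite -[_ - _]expr1 mup_XsubCX addnC eq_sym; case: (a == x).
Qed.

Lemma nat_mod4_decomp k : exists q t, k = (q * 4 + t)%N /\ (t < 4)%N.
Proof. by exists (k %/ 4)%N, (k %% 4)%N; rewrite -divn_eq ltn_mod. Qed.

Section Construction.
Variables (R : realType) (lam : R) (i : nat) (e1 : nat -> nat -> R).

Local Notation sqrt2 := (Num.sqrt (2 : R)).

Definition base_weight (z : nat) : R :=
  if ((z %% 4 == 1) || (z %% 4 == 2))%N then 0 else lam.

Definition edge_sign (j : nat) : R := (j %% 4)%:R - 1.

Definition rescale (m : nat) : R := if (1 < m)%N then sqrt2 else 1.

(* Row l of T_1, obtained by solving (ii) and (iv) backwards from the matrix
   in which the edge into v_j is fixed: T_(j-1) by (iii) when j <= i+1, and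
   T_(i+1), where it is prescribed, otherwise.  Every merge of v_l' with its
   twin in between, for l' > 1, contributes a factor sqrt 2. *)
Definition base_edge (l j : nat) : R :=
  if (i < l)%N then e1 l j
  else if (j <= i.+1)%N then edge_sign j * lam / sqrt2 ^+ (j - maxn l 2)
  else e1 i.+1 j / sqrt2 ^+ (i.+1 - maxn l 2).

Definition edge_weight (m l j : nat) : R :=
  (if l == m then rescale m else 1) * base_edge l j.

(* In T_m the vertex v_m gets the weight of v_(m+1), making them twins; for
   m = 1 this agrees with p1 since p1 1 = p1 2. *)
Definition vertex_weight (m z : nat) : R :=
  if z == m then base_weight m.+1 else base_weight z.

Lemma sqrt2_neq0 : sqrt2 != 0.
Proof. by rewrite sqrtr_eq0 -ltNge ltr0n. Qed.

Lemma sqrt2_sqr : sqrt2 ^+ 2 = 2.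
Proof. by rewrite sqr_sqrtr // ler0n. Qed.

Lemma rescale_neq0 m : rescale m != 0.
Proof. by rewrite /rescale; case: ifP; rewrite ?sqrt2_neq0 ?oner_eq0. Qed.

Lemma rescale_div k N (x : R) : (0 < k < N)%N ->
  rescale k * (x / sqrt2 ^+ (N - maxn k 2)) = x / sqrt2 ^+ (N - maxn k.+1 2).
Proof.
case: k => [|[|k]] //= kN; first by rewrite mul1r.
rewrite /rescale /= !(maxn_idPl _) // -(subnSK kN) exprS.
by field; rewrite expf_neq0 sqrt2_neq0.
Qed.

Lemma edge_sign_neq0 j : ~~ odd j -> edge_sign j != 0.
Proof.
have [q [t [-> lt_t4]]] := nat_mod4_decomp j.
rewrite /edge_sign modnMDl oddD oddM andbF /=.
case: t lt_t4 => [|[|[|[|t]]]] //= _ _; rewrite ?mod0n ?modn_small //.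
- by rewrite sub0r oppr_eq0 oner_eq0.
- by rewrite (_ : (2%:R : R) - 1 = 1) ?oner_eq0 //; ring.
Qed.

Lemma base_weightS k :
  base_weight k.+2 = base_weight k.+1 + (if odd k.+1 then 0 else edge_sign k.+1 * lam).
Proof.
have [q [t [-> lt_t4]]] := nat_mod4_decomp k.
rewrite /base_weight /edge_sign -!addnS !modnMDl !oddD !oddM !andbF /=.
case: t lt_t4 => [|[|[|[|t]]]] //= _; rewrite ?modnn ?modn_small //=; ring.
Qed.

Lemma base_weight_sub_sign k :
  base_weight k.+1 - (if odd k.+1 then 0 else edge_sign k.+1 * lam) =
  if (k %% 4 == 0)%N then 0 else if (k %% 4 == 1)%N then - lam
  else if (k %% 4 == 2)%N then lam else 2 * lam.
Proof.
have [q [t [-> lt_t4]]] := nat_mod4_decomp k.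
rewrite /base_weight /edge_sign -!addnS !modnMDl !oddD !oddM !andbF /=.
case: t lt_t4 => [|[|[|[|t]]]] //= _; rewrite ?mod0n ?modnn ?modn_small //=; ring.
Qed.

Lemma edge_weight_off m m' l j : l != m -> l != m' ->
  edge_weight m l j = edge_weight m' l j.
Proof. by move=> /negbTE lm /negbTE lm'; rewrite /edge_weight lm lm'. Qed.

Lemma edge_weight_rescale k j : (0 < k)%N ->
  edge_weight k.+1 k.+1 j = sqrt2 * edge_weight k k.+1 j.
Proof. by move=> k0; rewrite /edge_weight eqxx gtn_eqF // mul1r /rescale ltnS k0. Qed.

Lemma edge_weight_next k : (0 < k <= i)%N ->
  edge_weight k k k.+1 = edge_sign k.+1 * lam.
Proof.
case/andP=> k0 ki; rewrite /edge_weight eqxx /base_edge ltnNge ki ltnS ki /=.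
rewrite rescale_div ?k0 ?ltnSn //.
have -> : maxn k.+1 2 = k.+1 by lia.
by rewrite subnn divr1.
Qed.

Lemma epsE_edge_weight_next k : (0 < k <= i)%N ->
  epsE (edge_weight k) k k.+1 = if odd k.+1 then 0 else edge_sign k.+1 * lam.
Proof. by move=> kk; rewrite /epsE edge_weight_next. Qed.

Lemma edge_weight_twin k j : (0 < k <= i)%N -> (k.+1 < j)%N ->
  edge_weight k k j = edge_weight k k.+1 j.
Proof.
case/andP=> k0 ki kj; rewrite /edge_weight eqxx gtn_eqF // mul1r /base_edge ltnNge ki /=.
case: ltnP => [ik | _]; last by case: leqP => _; rewrite rescale_div //; lia.
have -> : i = k by lia.
rewrite leqNgt kj /= rescale_div ?k0 ?ltnSn //.
have -> : maxn k.+1 2 = k.+1 by lia.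
by rewrite subnn divr1.
Qed.

Lemma base_edge_neq0 r l j : lam != 0 ->
  (forall l j, (i < l)%N -> (l < j)%N -> (j <= r)%N -> ~~ odd j -> e1 l j != 0) ->
  (l < j)%N -> (j <= r)%N -> ~~ odd j -> base_edge l j != 0.
Proof.
move=> lam0 e1_neq0 lj jr ej; rewrite /base_edge.
case: ltnP => il; first exact: e1_neq0.
have sq0 n : sqrt2 ^+ n != 0 by rewrite expf_neq0 ?sqrt2_neq0.
case: leqP => ji; rewrite mulf_neq0 ?invr_neq0 //; last by apply: e1_neq0 => //; lia.
by rewrite mulf_neq0 ?edge_sign_neq0.
Qed.

End Construction.

Theorem mainTheorem5 (R : realType) (lam : R) (r : nat) :
  lam != 0 -> (1 < r)%N ->
  let p1 := fun i : nat => if ((i %% 4 == 1) || (i %% 4 == 2))%N then 0 else lam in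
  forall i : nat, (1 <= i)%N -> (i <= r - 1)%N ->
  forall e1 : nat -> nat -> R,
    (forall l j : nat, (i < l)%N -> (l < j)%N -> (j <= r)%N -> ~~ odd j -> e1 l j != 0) ->
  exists (p : nat -> nat -> R) (e : nat -> nat -> nat -> R),
    (* T_1 has the prescribed vertex weights and the prescribed edge weights *)
    (forall z : nat, (1 <= z)%N -> (z <= r)%N -> p 1%N z = p1 z) /\
    (forall l j : nat, (i < l)%N -> (l < j)%N -> (j <= r)%N -> ~~ odd j ->
       e 1%N l j = e1 l j) /\
    (* T_1, ..., T_(i+1) are single-vertex-bag weighted threshold matrices *)
    (forall m : nat, (1 <= m)%N -> (m <= i.+1)%N -> svb_weights m r (e m)) /\
    (forall k : nat, (1 <= k)%N -> (k <= i)%N ->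
      (* (ii) *)
      (forall j : nat, (k.+1 < j)%N -> (j <= r)%N -> ~~ odd j ->
         e k k j = e k k.+1 j) /\
      (* (iii) *)
      (~~ odd k.+1 ->
         epsE (e k) k k.+1 = ((k.+1 %% 4)%:R - 1) * lam) /\
      (* (iv) *)
      (p k.+1 k.+1 = p k k + epsE (e k) k k.+1) /\
      (forall j : nat, (k.+1 < j)%N -> (j <= r)%N -> ~~ odd j ->
         e k.+1 k.+1 j = Num.sqrt 2 * e k k.+1 j) /\
      (forall z : nat, (k.+1 < z)%N -> (z <= r)%N ->
         p k.+1 z = p k z /\ p k z = p 1%N z) /\
      (forall z j : nat, (k.+1 < z)%N -> (z < j)%N -> (j <= r)%N -> ~~ odd j ->
         e k.+1 z j = e k z j /\ e k z j = e 1%N z j) /\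
      (* (v) *)
      (let x := p k k - epsE (e k) k k.+1 in
       (forall a : R,
          spec_mult (svb_matrix k r (p k) (e k)) a =
          (spec_mult (svb_matrix k.+1 r (p k.+1) (e k.+1)) a + (a == x))%N) /\
       x = (if (k %% 4 == 0)%N then 0
            else if (k %% 4 == 1)%N then - lam
            else if (k %% 4 == 2)%N then lam
            else 2 * lam))).
Proof.
move=> lam0 r1 p1 i i1 ir e1 e1_neq0.
exists (vertex_weight lam), (edge_weight lam i e1).
split; first by move=> [|[|z]] // _ _; rewrite /vertex_weight.
split; first by move=> l j il _ _ _; rewrite /edge_weight gtn_eqF ?mul1r /base_edge ?il //; lia.
split.
  move=> m _ _ l j _ lj jr ej; rewrite /edge_weight mulf_neq0 ?(base_edge_neq0 lam0 e1_neq0) //.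
  by case: (l == m); rewrite ?rescale_neq0 ?oner_eq0.
move=> k k1 ki; have kk : (0 < k <= i)%N by rewrite k1.
have epsk := epsE_edge_weight_next lam e1 kk.
have merged : vertex_weight lam k.+1 k.+1 =
    vertex_weight lam k k + epsE (edge_weight lam i e1 k) k k.+1.
  by rewrite /vertex_weight !eqxx base_weightS epsk.
have vertex_off z : (k.+1 < z)%N -> vertex_weight lam k.+1 z = vertex_weight lam k z /\
    vertex_weight lam k z = vertex_weight lam 1 z.
  by move=> kz; rewrite /vertex_weight !gtn_eqF //; lia.
split; first by move=> j kj _ _; apply: edge_weight_twin.
split; first by move=> /negbTE ek; rewrite epsk ek.
split; first exact: merged.
split; first by move=> j _ _ _; apply: edge_weight_rescale.
split; first by move=> z kz _; apply: vertex_off.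
split; first by move=> z j kz _ _ _; split; apply: edge_weight_off; apply/eqP; lia.
move=> x; split; last by rewrite /x /vertex_weight eqxx epsk base_weight_sub_sign.
apply: spec_mult_mulXsubC; apply: (char_poly_svb_twin _ (sqrt2_neq0 R) (sqrt2_sqr R)).
- lia.
- by rewrite /vertex_weight eqxx gtn_eqF.
- by move=> j /andP[kj _] _; apply: edge_weight_twin.
- exact: merged.
- by move=> j _ _; apply: edge_weight_rescale.
- by move=> z /andP[kz _]; case: (vertex_off z kz).
- by move=> z j /andP[kz _] _ _; apply: edge_weight_off; apply/eqP; lia.
Qed.
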